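(* Let $\mathfrak{g}$ be a finite-dimensional Lie algebra over a field $K$ of characteristic zero, and let $x\cdot y=[\phi(x),y]$ be an inner CPA-structure on $\mathfrak{g}$, with $\phi$ a Lie algebra endomorphism, and $A=(\mathfrak{g},\cdot)$. Define $I_0=0$ and $I_n=\{x\in\mathfrak{g}\mid x\cdot\mathfrak{g}\subseteq I_{n-1}\}$ for $n\ge1$. Then $\phi(I_n)\subseteq I_n$ for all $n$, and every Lie algebra ideal of $\mathfrak{g}$ is an ideal of the algebra $A$. Conversely, if the structure is nondegenerate, every ideal of the algebra $A$ is a Lie algebra ideal.
   Context: A CPA-structure on $\mathfrak{g}$ is a bilinear product $x\cdot y$ satisfying, for all $x,y,z$: $x\cdot y=y\cdot x$; $[x,y]\cdot z=x\cdot(y\cdot z)-y\cdot(x\cdot z)$; $x\cdot[y,z]=[x\cdot y,z]+[y,x\cdot z]$. It is inner if $x\cdot y=[\phi(x),y]$ with $\phi$ a Lie algebra homomorphism $\mathfrak{g}\to\mathfrak{g}$. It is nondegenerate if $\{x\mid x\cdot y=0\ \forall y\}=0$. A subspace $J$ is an ideal of $A$ if $\mathfrak{g}\cdot J\subseteq J$. *)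

From HB Require Import structures.
From mathcomp Require Import all_boot all_order all_algebra.
Set Implicit Arguments. Unset Strict Implicit. Unset Printing Implicit Defensive.
Import GRing.Theory.
Local Open Scope ring_scope.

Definition is_lie_bracket (K : fieldType) (V : vectType K) (br : V -> V -> V) : Prop :=
  [/\ (forall (a : K) (x y z : V), br (a *: x + y) z = a *: br x z + br y z),
      (forall (a : K) (x y z : V), br z (a *: x + y) = a *: br z x + br z y),
      (forall x : V, br x x = 0) &
      (forall x y z : V, br x (br y z) + br y (br z x) + br z (br x y) = 0)].

Definition is_lie_endo (K : fieldType) (V : vectType K) (br : V -> V -> V)
  (phi : V -> V) : Prop :=
  (forall (a : K) (x y : V), phi (a *: x + y) = a *: phi x + phi y) /\
  (forall x y : V, phi (br x y) = br (phi x) (phi y)).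

Definition is_CPA (K : fieldType) (V : vectType K) (br prod : V -> V -> V) : Prop :=
  [/\ (forall x y : V, prod x y = prod y x),
      (forall x y z : V, prod (br x y) z = prod x (prod y z) - prod y (prod x z)) &
      (forall x y z : V, prod x (br y z) = br (prod x y) z + br y (prod x z))].

Definition cpa_nondegenerate (K : fieldType) (V : vectType K) (prod : V -> V -> V) : Prop :=
  forall x : V, (forall y : V, prod x y = 0) -> x = 0.

Definition lie_ideal (K : fieldType) (V : vectType K) (br : V -> V -> V)
  (J : {vspace V}) : Prop :=
  forall x y : V, y \in J -> br x y \in J.

Definition alg_ideal (K : fieldType) (V : vectType K) (prod : V -> V -> V)
  (J : {vspace V}) : Prop :=
  forall x y : V, y \in J -> prod x y \in J.

Fixpoint Iseq (K : fieldType) (V : vectType K) (prod : V -> V -> V) (n : nat)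
  : V -> Prop :=
  match n with
  | O => fun x => x = 0
  | S m => fun x => forall y : V, Iseq prod m (prod x y)
  end.

From HB Require Import structures.
From mathcomp Require Import all_boot all_order all_algebra.
Set Implicit Arguments. Unset Strict Implicit. Unset Printing Implicit Defensive.
Import GRing.Theory.
Local Open Scope ring_scope.

(* Write x.y = [phi x, y].  Commutativity of the product and antisymmetry of
   the bracket give (phi x).y = [phi y, phi x] = -(x.(phi y)), so phi maps the
   layers I_n into themselves.  Conversely, nondegeneracy forces phi to be injective,
   hence bijective in finite dimension, so every [x, _] is some [phi x', _]. *)

Section LinearOf.
Variables (R : pzRingType) (U W : lmodType R) (f : U -> W).
Hypothesis f_lin : forall (a : R) (x y : U), f (a *: x + y) = a *: f x + f y.

Definition linear_of : {linear U -> W} :=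
  HB.pack f (GRing.isLinear.Build R U W *:%R f f_lin).

Lemma linear_of0 : f 0 = 0.
Proof. exact: (raddf0 linear_of). Qed.

Lemma linear_ofN x : f (- x) = - f x.
Proof. exact: (raddfN linear_of). Qed.

Lemma linear_ofD x y : f (x + y) = f x + f y.
Proof. exact: (raddfD linear_of). Qed.

End LinearOf.

Section LieBracket.
Variables (K : fieldType) (V : vectType K) (br : V -> V -> V).
Hypothesis br_lie : is_lie_bracket br.

Let br_linl z : forall (a : K) (x y : V), br (a *: x + y) z = a *: br x z + br y z.
Proof. by case: br_lie => brl _ _ _ a x y; apply: brl. Qed.

Let br_linr z : forall (a : K) (x y : V), br z (a *: x + y) = a *: br z x + br z y.
Proof. by case: br_lie => _ brr _ _ a x y; apply: brr. Qed.

Lemma lie_bracket0l y : br 0 y = 0.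
Proof. exact: (linear_of0 (br_linl y)). Qed.

Lemma lie_bracketNl x y : br (- x) y = - br x y.
Proof. exact: (linear_ofN (br_linl y) x). Qed.

Lemma lie_bracket_anti x y : br x y = - br y x.
Proof.
case: br_lie => _ _ bra _; apply/eqP; rewrite -subr_eq0 opprK.
have := bra (x + y).
rewrite (linear_ofD (br_linl _)) !(linear_ofD (br_linr _)) !bra add0r addr0.
by move->.
Qed.

End LieBracket.

Lemma Iseq_opp (K : fieldType) (V : vectType K) (prod : V -> V -> V) :
  (forall x y, prod (- x) y = - prod x y) ->
  forall n x, Iseq prod n x -> Iseq prod n (- x).
Proof.
move=> prodNl; elim=> [|n IHn] x /=; first by move->; rewrite oppr0.
by move=> Ix y; rewrite prodNl; apply: IHn.
Qed.

Lemma linear_inj_surj (K : fieldType) (V : vectType K) (f : {linear V -> V}) :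
  injective f -> forall x, exists y, f y = x.
Proof.
move=> f_inj x; pose g : 'End(V) := linfun f.
have g_inj : lker g == 0%VS by apply/lker0P => u v; rewrite !lfunE; apply: f_inj.
by exists ((g^-1)%VF x); rewrite -[f _]lfunE lker0_lfunVK.
Qed.

Section InnerCPA.
Variables (K : fieldType) (V : vectType K) (br : V -> V -> V) (phi : V -> V).
Hypothesis br_lie : is_lie_bracket br.
Hypothesis phi_lin : forall (a : K) (x y : V), phi (a *: x + y) = a *: phi x + phi y.

Local Notation inner := (fun x y => br (phi x) y).

Lemma inner_oppl x y : inner (- x) y = - inner x y.
Proof. by rewrite /= linear_ofN // lie_bracketNl. Qed.

Lemma inner_phil (inner_comm : forall x y, inner x y = inner y x) x y :
  inner (phi x) y = - inner x (phi y).
Proof. by rewrite /= inner_comm (lie_bracket_anti br_lie). Qed.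

Lemma Iseq_inner_phi (inner_comm : forall x y, inner x y = inner y x) n x :
  Iseq inner n x -> Iseq inner n (phi x).
Proof.
case: n => [|n] /= Ix; first by rewrite Ix linear_of0.
by move=> y; rewrite inner_phil //; apply: Iseq_opp inner_oppl _ _ _.
Qed.

Lemma inner_nondegenerate_inj : cpa_nondegenerate inner -> injective phi.
Proof.
move=> nd u v phi_uv; apply/eqP; rewrite -subr_eq0; apply/eqP.
by apply: nd => y; rewrite /= linear_ofD // linear_ofN // phi_uv subrr lie_bracket0l.
Qed.

End InnerCPA.

Theorem lemma2p11 (K : fieldType) (V : vectType K) (br : V -> V -> V)
  (phi : V -> V) :
  [pchar K] =i pred0 ->
  is_lie_bracket br ->
  is_lie_endo br phi ->
  is_CPA br (fun x y => br (phi x) y) ->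
  (forall (n : nat) (x : V),
      Iseq (fun x y => br (phi x) y) n x -> Iseq (fun x y => br (phi x) y) n (phi x)) /\
  (forall J : {vspace V}, lie_ideal br J -> alg_ideal (fun x y => br (phi x) y) J) /\
  (cpa_nondegenerate (fun x y => br (phi x) y) ->
     forall J : {vspace V}, alg_ideal (fun x y => br (phi x) y) J -> lie_ideal br J).
Proof.
move=> _ br_lie [phi_lin _] [inner_comm _ _].
split; [|split].
- exact: Iseq_inner_phi.
- by move=> J J_ideal x y; apply: J_ideal.
move=> nd J J_ideal x y yJ.
have phi_inj := inner_nondegenerate_inj br_lie phi_lin nd.
have [x' <-] := linear_inj_surj (f := linear_of phi_lin) phi_inj x.
exact: J_ideal.
Qed.
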